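(* Let $f:\mathbb R^n\to\mathbb R$ be continuously differentiable, $A\in\mathbb R^{q\times n}$, $b\in\mathbb R^q$, and $c=(c_1,\dots,c_p):\mathbb R^n\to\mathbb R^p$ with each $c_i$ concave and twice continuously differentiable. For each $\varepsilon>0$ let $(x(\varepsilon),y(\varepsilon),z^I(\varepsilon))\in\mathbb R^{n+q+2p}$ be a stationary point of $\mathrm P_\varepsilon$ with multiplier $\lambda(\varepsilon)\in\mathbb R^n$. Let $(x^*,y^*,[z^I]^*,\lambda^* )$ be any point of $\limsup_{\varepsilon\searrow0}\{(x(\varepsilon),y(\varepsilon),z^I(\varepsilon),\lambda(\varepsilon))\}$, and let $\beta=\{i:[y^I]^*_i=0=[z^I]^*_i\}$, $\gamma=\{i:[y^I]^*_i>0=[z^I]^*_i\}$. Then there exists $\eta_\beta\in[0,1]^{|\beta|}$ such that $$\nabla f(x^* )+\Big[\sum_{j=1}^p[y^I]^*_j\nabla^2c_j(x^* )-A^TA-\mathcal Jc_\gamma(x^* )^T\mathcal Jc_\gamma(x^* )-\mathcal Jc_\beta(x^* )^T\mathrm{Diag}(\eta_\beta)\mathcal Jc_\beta(x^* )\Big]\lambda^*=0.$$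
   Context: $\mathcal Jc(x)$ is the $p\times n$ Jacobian of $c$; for an index set $\beta$, $c_\beta=(c_i)_{i\in\beta}$ with Jacobian $\mathcal Jc_\beta$. $G(x,y,z^I)=\big(A^Ty^E+\mathcal Jc(x)^Ty^I,\ Ax-b+y^E,\ c(x)+y^I-z^I\big)$, $y=(y^E,y^I)\in\mathbb R^q\times\mathbb R^p$. $\psi_\varepsilon(a,b)=a+b-\sqrt{a^2+b^2+2\varepsilon^2}$, $\Psi_\varepsilon(y^I,z^I)=(\psi_\varepsilon(y^I_i,z^I_i))_{i=1}^p$, $\Theta(\varepsilon)=\{(y^I,z^I):\Psi_\varepsilon(y^I,z^I)=0\}$, and $\mathcal J_{z^I}\Psi_\varepsilon(y^I,z^I)=\mathrm{Diag}\big(1-z^I_i/\sqrt{(y^I_i)^2+(z^I_i)^2+2\varepsilon^2}\big)$. Problem $\mathrm P_\varepsilon$ is $\min f(x)$ s.t. $G(x,y,z^I)=0$, $(y^I,z^I)\in\Theta(\varepsilon)$. A feasible point $(x,y,z^I)$ of $\mathrm P_\varepsilon$ is a stationary point of $\mathrm P_\varepsilon$ with multiplier $\lambda\in\mathbb R^n$ if $\nabla f(x)+\big[\sum_{i=1}^p y^I_i\nabla^2c_i(x)-A^TA-\mathcal Jc(x)^T\mathcal J_{z^I}\Psi_\varepsilon(y^I,z^I)\mathcal Jc(x)\big]\lambda=0$. $\mathrm{Diag}(v)$ is the diagonal matrix with diagonal $v$. *)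

From HB Require Import structures.
From mathcomp Require Import all_boot all_order all_algebra.
From mathcomp Require Import all_classical all_reals all_analysis.
Export numFieldNormedType.Exports.
Import Order.TTheory GRing.Theory Num.Theory.
Set Implicit Arguments. Unset Strict Implicit. Unset Printing Implicit Defensive.
Local Open Scope classical_set_scope.
Local Open Scope ring_scope.

Section Defs.
Variable R : realType.

Definition partial {n : nat} (g : 'cV[R]_n -> R) (i : 'I_n) (x : 'cV[R]_n) : R :=
  'D_(delta_mx i 0) g x.

Definition grad {n : nat} (g : 'cV[R]_n -> R) (x : 'cV[R]_n) : 'cV[R]_n :=
  \col_i partial g i x.

Definition hess {n : nat} (g : 'cV[R]_n -> R) (x : 'cV[R]_n) : 'M[R]_n :=
  \matrix_(i, j) partial (partial g j) i x.

Definition C1 {n : nat} (g : 'cV[R]_n -> R) : Prop :=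
  (forall x, differentiable g x) /\ (forall i, continuous (partial g i)).

Definition C2 {n : nat} (g : 'cV[R]_n -> R) : Prop :=
  C1 g /\ (forall i, C1 (partial g i)).

Definition concave {n : nat} (g : 'cV[R]_n -> R) : Prop :=
  forall (x y : 'cV[R]_n) (t : R), 0 <= t <= 1 ->
    t * g x + (1 - t) * g y <= g (t *: x + (1 - t) *: y).

Definition cval {n p : nat} (c : 'I_p -> 'cV[R]_n -> R) (x : 'cV[R]_n) : 'cV[R]_p :=
  \col_i c i x.

Definition Jac {n p : nat} (c : 'I_p -> 'cV[R]_n -> R) (x : 'cV[R]_n) : 'M[R]_(p, n) :=
  \matrix_(i, j) partial (c i) j x.

(* Jc_S(x): rows of Jc(x) indexed by S (in increasing order) *)
Definition subJac {n p : nat} (S : {set 'I_p}) (c : 'I_p -> 'cV[R]_n -> R)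
    (x : 'cV[R]_n) : 'M[R]_(#|S|, n) :=
  rowsub (fun k : 'I_#|S| => enum_val k) (Jac c x).

Definition psi_eps (eps a b : R) : R :=
  a + b - Num.sqrt (a ^+ 2 + b ^+ 2 + 2 * eps ^+ 2).

Definition Psi_eps {p : nat} (eps : R) (yI zI : 'cV[R]_p) : 'cV[R]_p :=
  \col_i psi_eps eps (yI i 0) (zI i 0).

Definition in_Theta {p : nat} (eps : R) (yI zI : 'cV[R]_p) : Prop :=
  Psi_eps eps yI zI = 0.

Definition JzPsi {p : nat} (eps : R) (yI zI : 'cV[R]_p) : 'M[R]_p :=
  diag_mx (\row_i (1 - zI i 0 / Num.sqrt (yI i 0 ^+ 2 + zI i 0 ^+ 2 + 2 * eps ^+ 2))).

(* G(x, y, zI) = 0, with y = (yE, yI) *)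
Definition G_zero {n q p : nat} (A : 'M[R]_(q, n)) (b : 'cV[R]_q)
    (c : 'I_p -> 'cV[R]_n -> R) (x : 'cV[R]_n) (yE : 'cV[R]_q)
    (yI zI : 'cV[R]_p) : Prop :=
  [/\ A^T *m yE + (Jac c x)^T *m yI = 0,
      A *m x - b + yE = 0 &
      cval c x + yI - zI = 0].

Definition feasible_P {n q p : nat} (eps : R) (A : 'M[R]_(q, n)) (b : 'cV[R]_q)
    (c : 'I_p -> 'cV[R]_n -> R) (x : 'cV[R]_n) (yE : 'cV[R]_q)
    (yI zI : 'cV[R]_p) : Prop :=
  G_zero A b c x yE yI zI /\ in_Theta eps yI zI.

Definition stationary_P {n q p : nat} (eps : R) (f : 'cV[R]_n -> R)
    (A : 'M[R]_(q, n)) (b : 'cV[R]_q) (c : 'I_p -> 'cV[R]_n -> R)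
    (x : 'cV[R]_n) (yE : 'cV[R]_q) (yI zI : 'cV[R]_p) (lam : 'cV[R]_n) : Prop :=
  feasible_P eps A b c x yE yI zI /\
  grad f x + (\sum_(i < p) yI i 0 *: hess (c i) x - A^T *m A
              - (Jac c x)^T *m JzPsi eps yI zI *m Jac c x) *m lam = 0.

End Defs.

From HB Require Import structures.
From mathcomp Require Import all_boot all_order all_algebra.
From mathcomp Require Import all_classical all_reals all_analysis.
From mathcomp Require Import lra ring.
Import Order.TTheory GRing.Theory Num.Theory numFieldNormedType.Exports.
Local Open Scope classical_set_scope.
Local Open Scope ring_scope.

(* On Theta(eps) every pair (y_i, z_i) is positive with y_i z_i = eps^2, and
   the i-th diagonal entry of J_{zI} Psi_eps is the weight y_i / (y_i + z_i),
   which lies in [0, 1].  Along a subsequence the weights converge to some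
   d in [0, 1]^p, and by continuity the stationarity equation of P_eps passes
   to the limit with Diag(d) in place of J_{zI} Psi_eps.  In the limit
   y*_i z*_i = 0, so d_i = 1 on gamma, d_i = 0 wherever z*_i > 0, and d_i is
   only known to lie in [0, 1] on beta; splitting Jc^T Diag(d) Jc along gamma
   and beta gives the claim with eta = d restricted to beta. *)

Section MatrixLimits.
Context {R : realType} {T : Type} {F : set_system T} {FF : Filter F}.

Lemma cvg_mxP {m n} {M : T -> 'M[R]_(m, n)} {L : 'M[R]_(m, n)} :
  M @ F --> L <-> forall i j, (fun t => M t i j) @ F --> L i j.
Proof.
split=> [ML i j | ML]; first exact: (continuous_cvg _ (@coord_continuous R m n i j _) ML).
apply/cvg_mx_entourageP => A entA.
apply: filter_forall => i; apply: filter_forall => j.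
have /cvg_entourageP/(_ A entA) MijA := ML i j.
by near=> t; rewrite inE; near: t.
Unshelve. all: by end_near.
Qed.

Lemma cvg_trmx {m n} {M : T -> 'M[R]_(m, n)} {L : 'M[R]_(m, n)} :
  M @ F --> L -> (fun t => (M t)^T) @ F --> L^T.
Proof.
move/cvg_mxP=> ML; apply/cvg_mxP => i j; rewrite mxE.
by under eq_cvg do rewrite mxE; exact: ML.
Qed.

Lemma cvg_mulmx {m n k} {M : T -> 'M[R]_(m, n)} {N : T -> 'M[R]_(n, k)}
    {L : 'M[R]_(m, n)} {K : 'M[R]_(n, k)} :
  M @ F --> L -> N @ F --> K -> (fun t => M t *m N t) @ F --> L *m K.
Proof.
move=> /cvg_mxP ML /cvg_mxP NK; apply/cvg_mxP => i j; rewrite mxE.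
under eq_cvg do rewrite mxE.
by apply: cvg_big => [|l _]; [exact: add_continuous | exact: cvgM].
Qed.

Lemma cvg_diag_mx {n} {d : T -> 'rV[R]_n} {L : 'rV[R]_n} :
  d @ F --> L -> (fun t => diag_mx (d t)) @ F --> diag_mx L.
Proof.
move/cvg_mxP=> dL; apply/cvg_mxP => i j; rewrite mxE.
by under eq_cvg do rewrite mxE; exact: cvgMn.
Qed.

End MatrixLimits.

Lemma cvg_sum {R : numFieldType} {V : normedModType R} {T : Type} {F : set_system T}
    {FF : Filter F} {I : Type} (r : seq I) (u : I -> T -> V) (l : I -> V) :
  (forall i, u i @ F --> l i) ->
  (fun t => \sum_(i <- r) u i t) @ F --> \sum_(i <- r) l i.
Proof. by move=> ul; apply: cvg_big => [|i _]; [exact: add_continuous | exact: ul]. Qed.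

Lemma continuous_mx {R : realType} {U : topologicalType} {m n} {M : U -> 'M[R]_(m, n)} :
  (forall i j, continuous (fun x => M x i j)) -> continuous M.
Proof. by move=> Mij x; apply/cvg_mxP => i j; exact: Mij. Qed.

Lemma increasing_seq_ge (f : nat -> nat) : increasing_seq f -> forall n, (n <= f n)%N.
Proof.
move=> /increasing_seqP incr_f; elim=> // n IHn.
by apply: leq_ltn_trans IHn _; have := incr_f n; rewrite ltEnat.
Qed.

Lemma cvg_subseq {T : topologicalType} {u : nat -> T} {l : T} {f : nat -> nat} :
  increasing_seq f -> u @ \oo --> l -> (u \o f) @ \oo --> l.
Proof.
move=> incr_f; apply: cvg_comp => P [N _ PN]; exists N => // k /= Nk.
by apply: PN; rewrite /= (leq_trans Nk) ?increasing_seq_ge.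
Qed.

Lemma increasing_seq_comp (f g : nat -> nat) :
  increasing_seq f -> increasing_seq g -> increasing_seq (f \o g).
Proof. by move=> incr_f incr_g m k /=; rewrite incr_f -leEnat incr_g. Qed.

Lemma bounded_rV_cvg_subseq {R : realType} {n} (u : nat -> 'rV[R]_n) (M : R) :
  (forall k i, `|u k 0 i| <= M) ->
  exists2 phi : nat -> nat, increasing_seq phi & cvgn (u \o phi).
Proof.
move=> uM.
suff [phi incr_phi cvg_entries] : exists2 phi : nat -> nat, increasing_seq phi &
    forall i, i \in enum 'I_n -> cvgn (fun k => u (phi k) 0 i).
  exists phi => //; apply/cvg_ex; exists (\row_i lim ((fun k => u (phi k) 0 i) @ \oo)).
  by apply/cvg_mxP => i j; rewrite ord1 mxE; apply: cvg_entries; rewrite mem_enum.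
elim: (enum 'I_n) => [|i s [phi incr_phi cvg_s]]; first by exists id.
have bounded_i : bounded_fun (fun k => u (phi k) 0 i).
  by exists M; split; [exact: num_real | move=> N MN k _; exact: le_trans (uM _ _) (ltW MN)].
have [psi incr_psi cvg_i] := bolzano_weierstrass bounded_i.
exists (phi \o psi); first exact: increasing_seq_comp.
move=> j; rewrite inE => /predU1P[-> // | js].
exact: cvgP (cvg_subseq incr_psi (cvg_s j js)).
Qed.

Section Regularity.
Context {R : realType} {n : nat}.

Lemma grad_continuous {g : 'cV[R]_n -> R} : C1 g -> continuous (grad g).
Proof.
case=> _ partial_cont; apply: continuous_mx => i j.
by under eq_fun do rewrite mxE; exact: partial_cont.
Qed.

Lemma hess_continuous {g : 'cV[R]_n -> R} : C2 g -> continuous (hess g).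
Proof.
case=> _ partial_C1; apply: continuous_mx => i j.
by under eq_fun do rewrite mxE; exact: (partial_C1 j).2.
Qed.

Lemma Jac_continuous {p} {c : 'I_p -> 'cV[R]_n -> R} :
  (forall i, C1 (c i)) -> continuous (Jac c).
Proof.
move=> c_C1; apply: continuous_mx => i j.
by under eq_fun do rewrite mxE; exact: (c_C1 i).2.
Qed.

End Regularity.

Section SmoothedComplementarity.
Context {R : realType}.

Lemma psi_eps_eq0 {eps y z : R} : 0 < eps -> psi_eps eps y z = 0 ->
  [/\ 0 < y, 0 < z, Num.sqrt (y ^+ 2 + z ^+ 2 + 2 * eps ^+ 2) = y + z
    & y * z = eps ^+ 2].
Proof.
move=> eps_gt0 /eqP; rewrite subr_eq0 => /eqP sqrt_eq.
have rad_ge0 : 0 <= y ^+ 2 + z ^+ 2 + 2 * eps ^+ 2.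
  by apply: addr_ge0; [apply: addr_ge0 | apply: mulr_ge0]; rewrite ?sqr_ge0.
have yz_ge0 : 0 <= y + z by rewrite sqrt_eq sqrtr_ge0.
have := sqr_sqrtr rad_ge0; rewrite -sqrt_eq => sq_eq.
have yz : y * z = eps ^+ 2 by nra.
have eps2_gt0 : 0 < eps ^+ 2 by rewrite exprn_gt0.
by split => //; nra.
Qed.

Lemma in_Theta_psi_eps {p} {eps : R} {yI zI : 'cV[R]_p} :
  in_Theta eps yI zI -> forall i, psi_eps eps (yI i 0) (zI i 0) = 0.
Proof. by move=> /matrixP Theta i; have := Theta i 0; rewrite !mxE. Qed.

Definition Theta_weights {p} (yI zI : 'cV[R]_p) : 'rV[R]_p :=
  \row_i (yI i 0 / (yI i 0 + zI i 0)).

Lemma JzPsi_Theta {p} {eps : R} {yI zI : 'cV[R]_p} : 0 < eps -> in_Theta eps yI zI ->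
  JzPsi eps yI zI = diag_mx (Theta_weights yI zI).
Proof.
move=> eps_gt0 /in_Theta_psi_eps Theta; congr diag_mx; apply/rowP => i; rewrite !mxE.
have [y_gt0 z_gt0 -> _] := psi_eps_eq0 eps_gt0 (Theta i).
by field; rewrite gt_eqF ?addr_gt0.
Qed.

Lemma div_add_ge0_le1 (y z : R) : 0 <= y -> 0 <= z -> 0 <= y / (y + z) <= 1.
Proof.
move=> y_ge0 z_ge0; have [->|yz_neq0] := eqVneq (y + z) 0.
  by rewrite invr0 mulr0 lexx ler01.
have yz_gt0 : 0 < y + z by rewrite lt_def yz_neq0 addr_ge0.
by rewrite divr_ge0 ?addr_ge0 //= ler_pdivrMr // mul1r lerDl.
Qed.

Lemma Theta_weights_ge0_le1 {p} {eps : R} {yI zI : 'cV[R]_p} :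
  0 < eps -> in_Theta eps yI zI -> forall i, 0 <= Theta_weights yI zI 0 i <= 1.
Proof.
move=> eps_gt0 /in_Theta_psi_eps Theta i.
by have [y_gt0 z_gt0 _ _] := psi_eps_eq0 eps_gt0 (Theta i); rewrite mxE div_add_ge0_le1 ?ltW.
Qed.

Lemma cvg_ge0_le1 (u : nat -> R) (l : R) :
  (forall k, 0 <= u k <= 1) -> u @ \oo --> l -> 0 <= l <= 1.
Proof.
move=> u01 ul; apply/andP; split.
  by apply: cvgr_to_ge ul _; apply: nearW => k; case/andP: (u01 k).
by apply: cvgr_to_le ul _; apply: nearW => k; case/andP: (u01 k).
Qed.

Lemma complementarity_weight (y z w : R) :
  0 <= y -> 0 <= z -> y * z = 0 -> (y + z != 0 -> w = y / (y + z)) ->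
  w = ((0 < y) && (z == 0))%:R + ((y == 0) && (z == 0))%:R * w.
Proof.
move=> y_ge0 z_ge0 /eqP; rewrite mulf_eq0 => /orP[/eqP y0 | /eqP z0] w_lim.
  have [_ | z_neq0] := eqVneq z 0; first by rewrite y0 ltxx eqxx mul1r add0r.
  by rewrite w_lim y0 ?add0r // !andbF /= mulr0n !mul0r addr0.
rewrite z0 addr0 in w_lim *; rewrite eqxx !andbT; have [y0 | y_neq0] := eqVneq y 0.
  by rewrite y0 ltxx mul1r add0r.
by rewrite w_lim ?divff // lt_def y_neq0 y_ge0 mul0r addr0.
Qed.

Lemma cvg_complementarity_weight {e_ y_ z_ : nat -> R} {y z w : R} :
  (forall k, 0 < e_ k) -> (forall k, psi_eps (e_ k) (y_ k) (z_ k) = 0) ->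
  e_ @ \oo --> 0 -> y_ @ \oo --> y -> z_ @ \oo --> z ->
  (fun k => y_ k / (y_ k + z_ k)) @ \oo --> w ->
  w = ((0 < y) && (z == 0))%:R + ((y == 0) && (z == 0))%:R * w.
Proof.
move=> e_gt0 psi0 e0 yy zz ww.
have yz k := psi_eps_eq0 (e_gt0 k) (psi0 k).
have y_ge0 : 0 <= y.
  by apply: cvgr_to_ge yy _; apply: nearW => k; case: (yz k) => /ltW.
have z_ge0 : 0 <= z.
  by apply: cvgr_to_ge zz _; apply: nearW => k; case: (yz k) => _ /ltW.
apply: complementarity_weight => // [|yz_neq0].
  apply: (cvg_unique _ (cvgM yy zz)) => //.
  have -> : y_ \* z_ = e_ \* e_.
    by apply/funext => k; case: (yz k) => _ _ _; rewrite /= expr2.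
  by rewrite -(mulr0 0); apply: cvgM.
apply: (cvg_unique _ ww) => //.
exact: cvgM yy (cvgV yz_neq0 (cvgD yy zz)).
Qed.

Lemma cvg_Theta_weights {p} {e_ : nat -> R} {yI_ zI_ : nat -> 'cV[R]_p}
    {yI zI : 'cV[R]_p} {d : 'rV[R]_p} :
  (forall k, 0 < e_ k) -> (forall k, in_Theta (e_ k) (yI_ k) (zI_ k)) ->
  e_ @ \oo --> 0 -> yI_ @ \oo --> yI -> zI_ @ \oo --> zI ->
  (fun k => Theta_weights (yI_ k) (zI_ k)) @ \oo --> d ->
  forall i, d 0 i =
    (i \in [set i | (0 < yI i 0) && (zI i 0 == 0)]%SET)%:R +
    (i \in [set i | (yI i 0 == 0) && (zI i 0 == 0)]%SET)%:R * d 0 i.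
Proof.
move=> e_gt0 Theta e0 yy zz dd i; rewrite !inE.
apply: (cvg_complementarity_weight e_gt0 (fun k => in_Theta_psi_eps (Theta k) i) e0).
- exact: cvg_mxP.1 yy i 0.
- exact: cvg_mxP.1 zz i 0.
- apply: cvg_trans (cvg_mxP.1 dd 0 i); apply: near_eq_cvg.
  by apply: nearW => k; rewrite /= mxE.
Qed.

End SmoothedComplementarity.

Section WeightedGram.
Context {R : comPzRingType} {p n : nat}.

Lemma tr_mul_diag_mul m (M : 'M[R]_(m, n)) (d : 'rV[R]_m) a b :
  (M^T *m diag_mx d *m M) a b = \sum_i d 0 i * M i a * M i b.
Proof.
rewrite mul_mx_diag !mxE; apply: eq_bigr => i _.
by rewrite !mxE [M i a * _]mulrC.
Qed.

Lemma tr_rowsub_diag_rowsub (S : {set 'I_p}) (M : 'M[R]_(p, n)) (w : 'I_p -> R) :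
  let MS := rowsub (fun k : 'I_#|S| => enum_val k) M in
  MS^T *m diag_mx (\row_k w (enum_val k)) *m MS =
  M^T *m diag_mx (\row_i ((i \in S)%:R * w i)) *m M.
Proof.
apply/matrixP => a b; rewrite !tr_mul_diag_mul.
under eq_bigr do rewrite !mxE.
rewrite -(big_enum_val (A := mem S) (fun i => w i * M i a * M i b)) big_mkcond /=.
by apply: eq_bigr => i _; rewrite !mxE; case: (i \in S); rewrite ?mul1r ?mul0r.
Qed.

Lemma tr_mul_diag_mul_split {G B : {set 'I_p}} (M : 'M[R]_(p, n)) {d : 'rV[R]_p} :
  (forall i, d 0 i = (i \in G)%:R + (i \in B)%:R * d 0 i) ->
  let MG := rowsub (fun k : 'I_#|G| => enum_val k) M in
  let MB := rowsub (fun k : 'I_#|B| => enum_val k) M in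
  M^T *m diag_mx d *m M =
  MG^T *m MG + MB^T *m diag_mx (\row_k d 0 (enum_val k)) *m MB.
Proof.
move=> d_split MG MB.
have -> : MG^T *m MG = M^T *m diag_mx (\row_i ((i \in G)%:R * 1)) *m M.
  rewrite -(tr_rowsub_diag_rowsub G M (fun=> 1)) (_ : \row_k _ = const_mx 1).
    by rewrite diag_const_mx mulmx1.
  by apply/rowP => k; rewrite !mxE.
rewrite tr_rowsub_diag_rowsub -mulmxDl -mulmxDr -raddfD /=; congr (_ *m diag_mx _ *m _).
by apply/rowP => i; rewrite !mxE mulr1 -d_split.
Qed.

End WeightedGram.

Definition stationarity_residual {R : realType} {n q p : nat} (f : 'cV[R]_n -> R)
    (A : 'M[R]_(q, n)) (c : 'I_p -> 'cV[R]_n -> R)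
    (x : 'cV[R]_n) (yI : 'cV[R]_p) (D : 'M[R]_p) (lam : 'cV[R]_n) : 'cV[R]_n :=
  grad f x + (\sum_(j < p) yI j 0 *: hess (c j) x - A^T *m A
              - (Jac c x)^T *m D *m Jac c x) *m lam.

Lemma cvg_stationarity_residual {R : realType} {T : Type} {F : set_system T} {FF : Filter F}
    {n q p : nat} (f : 'cV[R]_n -> R) (A : 'M[R]_(q, n)) (c : 'I_p -> 'cV[R]_n -> R)
    {x_ : T -> 'cV[R]_n} {yI_ : T -> 'cV[R]_p} {D_ : T -> 'M[R]_p} {lam_ : T -> 'cV[R]_n}
    {x : 'cV[R]_n} {yI : 'cV[R]_p} {D : 'M[R]_p} {lam : 'cV[R]_n} :
  C1 f -> (forall i, C2 (c i)) ->
  x_ @ F --> x -> yI_ @ F --> yI -> D_ @ F --> D -> lam_ @ F --> lam ->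
  (fun t => stationarity_residual f A c (x_ t) (yI_ t) (D_ t) (lam_ t)) @ F -->
  stationarity_residual f A c x yI D lam.
Proof.
move=> f_C1 c_C2 xx yy DD ll.
have Jc_x : (fun t => Jac c (x_ t)) @ F --> Jac c x.
  exact: continuous_cvg _ (Jac_continuous (fun i => (c_C2 i).1) x) xx.
apply: cvgD; first exact: continuous_cvg _ (grad_continuous f_C1 x) xx.
apply: cvg_mulmx ll; apply: cvgB.
  apply: cvgB (cvg_cst _); apply: cvg_sum => j.
  apply: cvgZ; first exact: cvg_mxP.1 yy j 0.
  exact: continuous_cvg _ (hess_continuous (c_C2 j) x) xx.
by apply: cvg_mulmx => //; apply: cvg_mulmx DD; exact: cvg_trmx.
Qed.

Theorem theorem4p2 (R : realType) (n q p : nat)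
    (f : 'cV[R]_n -> R) (A : 'M[R]_(q, n)) (b : 'cV[R]_q)
    (c : 'I_p -> 'cV[R]_n -> R)
    (xe : R -> 'cV[R]_n) (yEe : R -> 'cV[R]_q) (yIe zIe : R -> 'cV[R]_p)
    (lame : R -> 'cV[R]_n)
    (xs : 'cV[R]_n) (yEs : 'cV[R]_q) (yIs zIs : 'cV[R]_p) (lams : 'cV[R]_n) :
  C1 f ->
  (forall i, concave (c i) /\ C2 (c i)) ->
  (forall eps : R, 0 < eps ->
     stationary_P eps f A b c (xe eps) (yEe eps) (yIe eps) (zIe eps) (lame eps)) ->
  (* (xs, (yEs, yIs), zIs, lams) is a point of the outer limit (limsup) as eps \searrow 0 *)
  (exists e : nat -> R, (forall k, 0 < e k) /\ e @ \oo --> (0 : R) /\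
     (xe \o e) @ \oo --> xs /\ (yEe \o e) @ \oo --> yEs /\
     (yIe \o e) @ \oo --> yIs /\ (zIe \o e) @ \oo --> zIs /\
     (lame \o e) @ \oo --> lams) ->
  let beta := [set i : 'I_p | (yIs i 0 == 0) && (zIs i 0 == 0)]%SET in
  let gamma := [set i : 'I_p | (0 < yIs i 0) && (zIs i 0 == 0)]%SET in
  exists eta : 'rV[R]_#|beta|,
    (forall k, 0 <= eta 0 k <= 1) /\
    grad f xs + (\sum_(j < p) yIs j 0 *: hess (c j) xs - A^T *m A
                 - (subJac gamma c xs)^T *m subJac gamma c xs
                 - (subJac beta c xs)^T *m diag_mx eta *m subJac beta c xs) *m lams = 0.
Proof.
move=> f_C1 c_C2 stat [e [e_gt0 [e0 [xx [_ [yy [zz ll]]]]]]] beta gamma.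
have Theta k := (stat _ (e_gt0 k)).1.2.
pose w k := Theta_weights (yIe (e k)) (zIe (e k)).
have w01 k := Theta_weights_ge0_le1 (e_gt0 k) (Theta k).
have [phi incr_phi /cvg_ex[d ww]] : exists2 phi, increasing_seq phi & cvgn (w \o phi).
  by apply: (@bounded_rV_cvg_subseq _ _ _ 1) => k i; rewrite ger0_norm; case/andP: (w01 k i).
have d_split := cvg_Theta_weights (fun k => e_gt0 (phi k)) (fun k => Theta (phi k))
  (cvg_subseq incr_phi e0) (cvg_subseq incr_phi yy) (cvg_subseq incr_phi zz) ww.
have residual_d : stationarity_residual f A c xs yIs (diag_mx d) lams = 0.
  apply: (cvg_unique _ (cvg_stationarity_residual f A c f_C1 (fun i => (c_C2 i).2)
    (cvg_subseq incr_phi xx) (cvg_subseq incr_phi yy) (cvg_diag_mx ww)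
    (cvg_subseq incr_phi ll))) => //.
  apply: cvg_near_cst; apply: nearW => k /=.
  rewrite -(JzPsi_Theta (e_gt0 (phi k)) (Theta (phi k))).
  exact: (stat _ (e_gt0 (phi k))).2.
exists (\row_k d 0 (enum_val k)); split.
  by move=> k; rewrite mxE; apply: cvg_ge0_le1 (cvg_mxP.1 ww 0 _) => j; exact: w01.
move: residual_d; rewrite /stationarity_residual.
by rewrite (tr_mul_diag_mul_split (Jac c xs) d_split) opprD addrA.
Qed.
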